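(* Let $(A,B)\in M_k(\mathbb{F}_q)\times M_{k,n-k}(\mathbb{F}_q)$ and let $T\in L(W,V)$ be the linear map whose matrix with respect to $\mathcal{B}_1,\mathcal{B}_2$ is $\begin{bmatrix}A^{\mathsf T}\\ B^{\mathsf T}\end{bmatrix}\in M_{n,k}(\mathbb{F}_q)$. Then $\operatorname{rank}\mathcal{C}(A,B)=k-\dim\mathfrak{I}(T)$, i.e. the pair $(A,B)$ has a reachability subspace of dimension $k-\dim\mathfrak{I}(T)$.
   Context: Let $\mathbb{F}_q$ be the finite field with $q$ elements, $n> k$ positive integers, $V$ an $n$-dimensional $\mathbb{F}_q$-vector space and $W\subseteq V$ a $k$-dimensional subspace. Fix an ordered basis $\mathcal{B}_1=(v_1,\ldots,v_k)$ of $W$ and extend it to an ordered basis $\mathcal{B}_2=(v_1,\ldots,v_n)$ of $V$. $L(W,V)$ is the space of linear maps $W\to V$; for $T\in L(W,V)$, $\mathfrak{I}(T)$ is the largest subspace $U\subseteq W$ with $T(U)\subseteq U$. For $(A,B)\in M_k(\mathbb{F}_q)\times M_{k,n-k}(\mathbb{F}_q)$, the reachability matrix is $\mathcal{C}(A,B)=[\,B\ \ AB\ \ \cdots\ \ A^{k-1}B\,]\in M_{k,k(n-k)}(\mathbb{F}_q)$, and $(A,B)$ is said to have an $r$-dimensional reachability subspace if $\operatorname{rank}\mathcal{C}(A,B)=r$. *)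

From HB Require Import structures.
From mathcomp Require Import all_boot all_order all_algebra all_fingroup all_field.
Set Implicit Arguments. Unset Strict Implicit. Unset Printing Implicit Defensive.
Import GRing.Theory.
Local Open Scope ring_scope.

(* Coordinates: V = F^(k + (n-k)) with basis B2 = standard basis,
   W = span of the first k basis vectors, identified with F^k via B1.
   A vector of W is a column vector x : 'cV_k; its image under T has
   coordinate column Tm *m x where Tm : 'M_(k + (n-k), k) is the matrix
   of T.  Subspaces are represented by matrices whose ROWS span them
   (mathcomp row-space convention), so the subspace of W spanned by the
   rows of U : 'M_(r,k) is mapped by T to the row space of U *m Tm^T. *)

Section Defs.
Variable F : fieldType.
Variables k m : nat.

Definition inclW r (U : 'M[F]_(r, k)) : 'M[F]_(r, k + m) := row_mx U 0.

Definition T_invariant (Tm : 'M[F]_(k + m, k)) r (U : 'M[F]_(r, k)) : bool :=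
  (U *m Tm^T <= inclW U)%MS.

(* U is the largest subspace of W with T(U) ⊆ U, i.e. U represents 𝔍(T) *)
Definition is_largest_invariant (Tm : 'M[F]_(k + m, k)) (U : 'M[F]_k) : Prop :=
  T_invariant Tm U /\
  forall r (U' : 'M[F]_(r, k)), T_invariant Tm U' -> (U' <= U)%MS.

Lemma reach_col_lt (j : 'I_(k * m)) : (j %% m < m)%N.
Proof.
case: m j => [|m'] j; last by rewrite ltn_pmod.
by case: j => j; rewrite muln0.
Qed.

(* reachability matrix C(A,B) = [B  AB ... A^(k-1) B] : column j of C is
   column (j mod m) of block A^(j div m) B *)
Definition reach (A : 'M[F]_k) (B : 'M[F]_(k, m)) : 'M[F]_(k, k * m) :=
  \matrix_(i < k, j < k * m)
     (A ^+ (j %/ m) *m B) i (Ordinal (reach_col_lt j)).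

End Defs.

(* The largest T-invariant subspace of W is the left kernel of the
   reachability matrix C(A,B).  In coordinates, T(U) ⊆ U means U A ⊆ U and
   U B = 0, so an invariant U kills every block A^i B of C(A,B).  Conversely
   the left kernel of C(A,B) kills A^i B for i < k, hence for every i by
   Cayley–Hamilton, which makes it stable under A and annihilated by B.
   Its dimension is k - rank C(A,B). *)
From HB Require Import structures.
From mathcomp Require Import all_boot all_order all_algebra all_fingroup all_field.
Set Implicit Arguments. Unset Strict Implicit.
Import GRing.Theory.
Local Open Scope ring_scope.

Section Reachability.
Variable F : fieldType.
Variables k m : nat.
Implicit Types (A : 'M[F]_k) (B : 'M[F]_(k, m)).

Lemma mulmx_reach_entry r A B (u : 'M[F]_(r, k)) a (j : 'I_(k * m)) (c : 'I_m) :
  val c = (j %% m)%N -> (u *m reach A B) a j = (u *m (A ^+ (j %/ m) *m B)) a c.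
Proof.
move=> jc; rewrite !mxE; apply: eq_bigr => l _; rewrite !mxE.
by have -> : Ordinal (reach_col_lt j) = c by apply: val_inj.
Qed.

Lemma mulmx_reach_eq0 r A B (u : 'M[F]_(r, k)) :
  (u *m reach A B == 0) = [forall i : 'I_k, u *m (A ^+ i *m B) == 0].
Proof.
apply/eqP/forallP => [uC0 i | uAB0].
  apply/eqP/matrixP => a c.
  have m_gt0 : (0 < m)%N by apply: leq_ltn_trans (ltn_ord c).
  have j_lt : (i * m + c < k * m)%N.
    apply: (@leq_trans (i * m + m)); first by rewrite ltn_add2l.
    by rewrite -mulSnr leq_mul2r ltn_ord orbT.
  have := @mulmx_reach_entry _ A B u a (Ordinal j_lt) c.
  rewrite /= modnMDl modn_small // => /(_ erefl).
  by rewrite divnMDl // divn_small // addn0 uC0 !mxE.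
apply/matrixP => a j.
have m_gt0 : (0 < m)%N by case: m j => [|//] [j]; rewrite muln0.
have i_lt : (j %/ m < k)%N by rewrite ltn_divLR.
rewrite (@mulmx_reach_entry _ A B u a j (Ordinal (reach_col_lt j))) //.
by have /eqP -> := uAB0 (Ordinal i_lt); rewrite !mxE.
Qed.

Lemma T_invariantE A B r (U : 'M[F]_(r, k)) :
  T_invariant (col_mx A^T B^T) U = (U *m A <= U)%MS && (U *m B == 0).
Proof.
rewrite /T_invariant /inclW tr_col_mx !trmxK mul_mx_row.
apply/idP/andP => [/submxP[X] | [/submxP[X ->] /eqP ->]].
  by rewrite mul_mx_row mulmx0 => /eq_row_mx[-> ->]; split=> //; apply: submxMl.
by rewrite (_ : row_mx _ 0 = X *m row_mx U 0) ?submxMl // mul_mx_row mulmx0.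
Qed.

Lemma T_invariant_mulmx_exp_eq0 A B r (U : 'M[F]_(r, k)) :
  T_invariant (col_mx A^T B^T) U -> forall i, U *m (A ^+ i *m B) = 0.
Proof.
rewrite T_invariantE => /andP[/submxP[X UA] /eqP UB0].
elim=> [|i IHi]; first by rewrite expr0 mul1mx.
by rewrite exprS -mulmxE -(mulmxA A) mulmxA UA -mulmxA IHi mulmx0.
Qed.

Lemma T_invariant_sub_kermx_reach A B r (U : 'M[F]_(r, k)) :
  T_invariant (col_mx A^T B^T) U -> (U <= kermx (reach A B))%MS.
Proof.
move/T_invariant_mulmx_exp_eq0 => UAB0.
by rewrite sub_kermx mulmx_reach_eq0; apply/forallP => i; rewrite UAB0.
Qed.

End Reachability.

Section PositiveDimension.
Variable F : fieldType.
Variables n m : nat.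

Lemma mulmx_exp_eq0_of_small r (A : 'M[F]_n.+1) (M : 'M[F]_(n.+1, m))
    (u : 'M[F]_(r, n.+1)) :
  (forall i : 'I_n.+1, u *m (A ^+ i *m M) = 0) ->
  forall i, u *m (A ^+ i *m M) = 0.
Proof.
move=> uAM0 i; set p := char_poly A.
have p_neq0 : p != 0 by rewrite monic_neq0 // char_poly_monic.
have -> : A ^+ i = horner_mx A ('X^i %% p).
  rewrite -{1}(horner_mx_X A) -rmorphXn /= [in LHS](divp_eq 'X^i p).
  by rewrite rmorphD rmorphM /= Cayley_Hamilton mulr0 add0r.
have size_lt : (size ('X^i %% p)%R <= n.+1)%N.
  by rewrite -ltnS -(size_char_poly A) ltn_modp.
rewrite -(coefK ('X^i %% p)) poly_def rmorph_sum /= mulmx_suml mulmx_sumr big1 //.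
move=> j _; rewrite horner_mxZ rmorphXn /= horner_mx_X -scalemxAl -scalemxAr.
by rewrite (uAM0 (Ordinal (leq_trans (ltn_ord j) size_lt))) scaler0.
Qed.

Lemma kermx_reach_largest_invariant (A : 'M[F]_n.+1) (B : 'M[F]_(n.+1, m)) :
  is_largest_invariant (col_mx A^T B^T) (kermx (reach A B)).
Proof.
set K := kermx (reach A B).
have KAB0 i : K *m (A ^+ i *m B) = 0.
  apply: mulmx_exp_eq0_of_small i => i.
  by have /eqP := mulmx_ker (reach A B); rewrite mulmx_reach_eq0 => /forallP/(_ i)/eqP.
split; last exact: T_invariant_sub_kermx_reach.
rewrite T_invariantE; apply/andP; split.
  rewrite sub_kermx mulmx_reach_eq0; apply/forallP => i.
  by rewrite -mulmxA (mulmxA A) mulmxE -exprS KAB0.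
by move: (KAB0 0%N); rewrite expr0 mul1mx => ->.
Qed.

End PositiveDimension.

Theorem corollary4 (F : finFieldType) (n k : nat) (hk : (0 < k)%N) (hkn : (k < n)%N)
    (A : 'M[F]_k) (B : 'M[F]_(k, n - k)) :
  let Tm : 'M[F]_(k + (n - k), k) := col_mx A^T B^T in
  (exists U : 'M[F]_k, is_largest_invariant Tm U) /\
  (forall U : 'M[F]_k, is_largest_invariant Tm U ->
     \rank (reach A B) = (k - \rank U)%N).
Proof.
case: k hk hkn A B => [//|k] _ _ A B Tm.
have [K_inv K_max] := kermx_reach_largest_invariant A B.
split; first by exists (kermx (reach A B)); split.
move=> U [U_inv U_max].
have -> : \rank U = \rank (kermx (reach A B)).
  by apply/eqP; rewrite eqn_leq !mxrankS ?U_max ?K_max.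
by rewrite mxrank_ker subKn // rank_leq_row.
Qed.
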